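(* $L_1(z)=R(z,1)$, where $L_1(z)$ is the coefficient of $x^1$ in $L(z,x)$.
   Context: Formulas are built from atoms by a binary product: every formula is an atom or $A\bullet B$. A context is a finite (possibly empty) list of formulas; commas denote concatenation; its length is its number of formulas. Size: $|p|=0$, $|A\bullet B|=1+|A|+|B|$. Frontier: $\mathrm{fr}(p)=p$, $\mathrm{fr}(A\bullet B)=\mathrm{fr}(A),\mathrm{fr}(B)$. A context is irreducible if its leftmost formula is not a product (it is empty or begins with an atom). A focused derivation is a finite derivation tree with no undischarged premises using only: ($\bullet L$) from $A,B,\Delta\vdash C$ infer $A\bullet B,\Delta\vdash C$; ($\bullet R^{foc}$) from $\Gamma\vdash A$ and $\Delta\vdash B$ infer $\Gamma,\Delta\vdash A\bullet B$ with $\Gamma$ irreducible; ($id^{atm}$) $p\vdash p$ for atoms $p$. For each $n$ fix the frontier $p_0,\dots,p_n$ of distinct atoms. Let $\ell_{n,k}$ (resp. $r_{n,k}$) be the number of focused derivations of sequents $\Gamma\vdash B$ with $|B|=n$, $\mathrm{fr}(B)=p_0,\dots,p_n$, and $\Gamma$ a context (resp. an irreducible context) of length $k$. $L(z,x)=\sum_{n,k}\ell_{n,k}z^nx^k$ and $R(z,x)=\sum_{n,k}r_{n,k}z^nx^k$ (formal power series). *)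

From Stdlib Require Import List.
From mathcomp Require Import all_boot.

Set Implicit Arguments.
Unset Strict Implicit.
Unset Printing Implicit Defensive.

(* Atoms are natural numbers; the fixed frontier p_0,...,p_n is 0,...,n. *)
Inductive formula : Type :=
| Atom (p : nat)
| Prod (A B : formula).

Fixpoint fsize (A : formula) : nat :=
  match A with
  | Atom _ => 0
  | Prod A B => (fsize A + fsize B).+1
  end.

Fixpoint frontier (A : formula) : seq nat :=
  match A with
  | Atom p => [:: p]
  | Prod A B => frontier A ++ frontier B
  end.

Definition irreducible (G : seq formula) : bool :=
  match G with
  | [::] => true
  | Atom _ :: _ => true
  | Prod _ _ :: _ => false
  end.

Inductive deriv : Type :=
| DId (p : nat)
| DL (d : deriv)             (* bullet-L applied to the derivation d *)
| DR (d1 d2 : deriv).        (* focused bullet-R with premises d1, d2 *)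

(* Conclusion of a tree, or None if the tree is not a correct rule application. *)
Fixpoint concl (d : deriv) : option (seq formula * formula) :=
  match d with
  | DId p => Some ([:: Atom p], Atom p)
  | DL d =>
      match concl d with
      | Some (A :: B :: D, C) => Some (Prod A B :: D, C)
      | _ => None
      end
  | DR d1 d2 =>
      match concl d1, concl d2 with
      | Some (G, A), Some (D, B) =>
          if irreducible G then Some (G ++ D, Prod A B) else None
      | _, _ => None
      end
  end.

Definition ell_deriv (n k : nat) (d : deriv) : Prop :=
  exists G B, concl d = Some (G, B) /\ fsize B = n /\
              frontier B = iota 0 n.+1 /\ size G = k.

Definition r_deriv (n k : nat) (d : deriv) : Prop :=
  exists G B, concl d = Some (G, B) /\ fsize B = n /\
              frontier B = iota 0 n.+1 /\ size G = k /\ irreducible G.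

Definition counts (P : deriv -> Prop) (m : nat) : Prop :=
  exists s : list deriv, NoDup s /\ (forall d, P d <-> In d s) /\ length s = m.

From HB Require Import structures.
From mathcomp Require Import all_boot zify.

Set Implicit Arguments.
Unset Strict Implicit.
Unset Printing Implicit Defensive.

(* Read from the root, a derivation of a sequent [A |- C] starts with the
   bullet-L steps that unfold the left spine of A into a, B_1, ..., B_k until
   the antecedent becomes irreducible: bullet-R needs an irreducible left part,
   which is nonempty and hence headed by an atom.  Stripping these steps is a
   bijection onto the derivations of [C] with an irreducible antecedent of any
   length; its inverse folds a, B_1, ..., B_k back into ((a.B_1)...).B_k by k
   bullet-L steps.  Everything is finite: a derivable antecedent has at most
   |C| + 1 formulas, and the derivations of a fixed [C] have height at most
   2|C| + 1 and use only the atoms of [C]. *)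

Lemma deriv_eq_dec : comparable deriv.
Proof.
by rewrite /comparable /decidable; decide equality; apply: PeanoNat.Nat.eq_dec.
Qed.

HB.instance Definition _ := comparableMixin deriv_eq_dec.

Lemma mem_In (T : eqType) (s : seq T) x : x \in s <-> List.In x s.
Proof.
elim: s => [|y s IHs] //=; rewrite in_cons -IHs.
by split=> [/orP[/eqP|]|[|->]]; [left | right | move->; rewrite eqxx | rewrite orbT].
Qed.

Lemma uniq_NoDup (T : eqType) (s : seq T) : uniq s -> List.NoDup s.
Proof.
elim: s => [|x s IHs] /=; first by constructor.
by case/andP=> /negP xNs /IHs; constructor=> // /mem_In.
Qed.

Lemma counts_count (P : deriv -> Prop) (p : pred deriv) (s : seq deriv) :
  (forall d, P d <-> p d) -> uniq s -> {subset p <= s} -> counts P (count p s).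
Proof.
move=> Pp s_uniq p_s; exists (filter p s); split; first exact/uniq_NoDup/filter_uniq.
split; last by rewrite -size_filter.
move=> d; rewrite Pp -mem_In mem_filter.
by split=> [pd | /andP[] //]; rewrite pd p_s.
Qed.

Lemma count_leq_cancel (T : eqType) (s : seq T) (p q : pred T) (f g : T -> T) :
  uniq s -> {in s, forall x, p x -> [/\ f x \in s, q (f x) & g (f x) = x]} ->
  count p s <= count q s.
Proof.
move=> s_uniq pq; rewrite -!size_filter -(size_map f).
apply: uniq_leq_size.
  rewrite map_inj_in_uniq ?filter_uniq // => x y.
  rewrite !mem_filter => /andP[px xs] /andP[py ys] fxy.
  by have [_ _ <-] := pq x xs px; have [_ _ <-] := pq y ys py; rewrite fxy.
move=> y /mapP[x]; rewrite mem_filter => /andP[px xs] ->.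
by have [fxs qfx _] := pq x xs px; rewrite mem_filter qfx.
Qed.

Lemma size_frontier A : size (frontier A) = (fsize A).+1.
Proof. by elim: A => //= A IHA B IHB; rewrite size_cat IHA IHB addSn addnS. Qed.

Lemma concl_frontier d G C :
  concl d = Some (G, C) -> flatten (map frontier G) = frontier C.
Proof.
elim: d G C => [p|d IHd|d1 IH1 d2 IH2] G C /=.
- by case=> <- <-.
- case E: (concl d) => [[[|A [|B D]] C']|] //; case=> <- <- /=.
  by rewrite -(IHd _ _ E) /= catA.
- case E1: (concl d1) => [[G1 A1]|] //; case E2: (concl d2) => [[G2 A2]|] //.
  case: ifP => // _ [<- <-] /=.
  by rewrite map_cat flatten_cat (IH1 _ _ E1) (IH2 _ _ E2).
Qed.

Lemma concl_size_ctx d G C :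
  concl d = Some (G, C) -> sumn (map fsize G) + size G = (fsize C).+1.
Proof.
move=> /concl_frontier/(congr1 size); rewrite size_frontier => <-.
by elim: G => //= A G IHG; rewrite size_cat size_frontier -IHG; lia.
Qed.

Lemma concl_size_ctx_le d G C : concl d = Some (G, C) -> size G <= (fsize C).+1.
Proof. by move/concl_size_ctx <-; rewrite leq_addl. Qed.

Lemma concl_size_ctx_gt0 d G C : concl d = Some (G, C) -> 0 < size G.
Proof. by move/concl_size_ctx; case: G. Qed.

Fixpoint height (d : deriv) : nat :=
  match d with
  | DId _ => 1
  | DL d => (height d).+1
  | DR d1 d2 => (maxn (height d1) (height d2)).+1
  end.

Fixpoint atoms (d : deriv) : seq nat :=
  match d with
  | DId p => [:: p]
  | DL d => atoms d
  | DR d1 d2 => atoms d1 ++ atoms d2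
  end.

Lemma concl_height_sum d G C :
  concl d = Some (G, C) -> height d <= fsize C + sumn (map fsize G) + 1.
Proof.
elim: d G C => [p|d IHd|d1 IH1 d2 IH2] G C /=.
- by case=> <- <-.
- case E: (concl d) => [[[|A [|B D]] C']|] //; case=> <- <- /=.
  by have := IHd _ _ E => /=; lia.
- case E1: (concl d1) => [[G1 A1]|] //; case E2: (concl d2) => [[G2 A2]|] //.
  case: ifP => // _ [<- <-] /=.
  have := IH1 _ _ E1; have := IH2 _ _ E2; rewrite map_cat sumn_cat gtn_max; lia.
Qed.

Lemma concl_height d G C : concl d = Some (G, C) -> height d <= (fsize C).*2.+1.
Proof.
move=> E; have := concl_height_sum E; have := concl_size_ctx E.
have := concl_size_ctx_gt0 E; case: G {E} => //= A G _; rewrite -addnn; lia.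
Qed.

Lemma concl_atoms d G C : concl d = Some (G, C) -> {subset atoms d <= frontier C}.
Proof.
elim: d G C => [p|d IHd|d1 IH1 d2 IH2] G C /=.
- by case=> _ <-.
- by case E: (concl d) => [[[|A [|B D]] C']|] //; case=> _ <-; apply: IHd E.
- case E1: (concl d1) => [[G1 A1]|] //; case E2: (concl d2) => [[G2 A2]|] //.
  case: ifP => // _ [_ <-] x /=; rewrite !mem_cat.
  by case/orP=> [/(IH1 _ _ E1) | /(IH2 _ _ E2)] ->; rewrite ?orbT.
Qed.

Fixpoint enum_deriv (h a : nat) : seq deriv :=
  if h is h'.+1 then
    let ds := enum_deriv h' a in
    map DId (iota 0 a) ++ map DL ds ++ [seq DR d1 d2 | d1 <- ds, d2 <- ds]
  else [::].

Lemma mem_enum_deriv h a d :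
  height d <= h -> all (fun p => p < a) (atoms d) -> d \in enum_deriv h a.
Proof.
elim: h d => [|h IHh] [p|d|d1 d2] //=; rewrite !mem_cat.
- by rewrite andbT => _ pa; rewrite (map_f DId) // mem_iota.
- by move=> hd ad; rewrite (map_f DL) ?orbT // IHh.
- rewrite ltnS geq_max all_cat => /andP[h1 h2] /andP[a1 a2].
  by rewrite (allpairs_f DR) ?IHh ?orbT.
Qed.

Fixpoint strip (d : deriv) : deriv := if d is DL d' then strip d' else d.

Fixpoint unfold (A : formula) : seq formula :=
  if A is Prod A B then unfold A ++ [:: B] else [:: A].

Definition refold (d : deriv) : deriv :=
  if concl d is Some (G, _) then iter (size G).-1 DL d else d.

Lemma size_unfold_gt0 A : 0 < size (unfold A).
Proof. by elim: A => //= A _ B _; rewrite size_cat addn1. Qed.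

Lemma irreducible_unfold A D : irreducible (unfold A ++ D).
Proof. by elim: A D => //= A IHA B _ D; rewrite -catA. Qed.

Lemma irreducible_atom_head G :
  irreducible G -> 0 < size G -> exists p G', G = Atom p :: G'.
Proof. by case: G => // -[p|] // G' _ _; exists p, G'. Qed.

Lemma concl_strip d A D C :
  concl d = Some (A :: D, C) -> concl (strip d) = Some (unfold A ++ D, C).
Proof.
elim: d A D C => [p|d IHd|d1 _ d2 _] A D C /=.
- by case=> <- <- <-.
- case E: (concl d) => [[[|A1 [|B1 D1]] C']|] //; case=> <- <- <-.
  by rewrite (IHd _ _ _ E) -catA.
- case E1: (concl d1) => [[G1 A1]|] //; case E2: (concl d2) => [[G2 A2]|] //.
  case: ifP => // irrG1 [].
  have [p [G' ->]] := irreducible_atom_head irrG1 (concl_size_ctx_gt0 E1).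
  by case=> <- <- <-.
Qed.

Lemma iter_DL_strip d A D C :
  concl d = Some (A :: D, C) -> iter (size (unfold A)).-1 DL (strip d) = d.
Proof.
elim: d A D C => [p|d IHd|d1 _ d2 _] A D C /=.
- by case=> <-.
- case E: (concl d) => [[[|A1 [|B1 D1]] C']|] //; case=> <- _ _ /=.
  rewrite size_cat addn1 -[in RHS](IHd _ _ _ E).
  by case: (size (unfold A1)) (size_unfold_gt0 A1).
- case E1: (concl d1) => [[G1 A1]|] //; case E2: (concl d2) => [[G2 A2]|] //.
  case: ifP => // irrG1 [].
  have [p [G' ->]] := irreducible_atom_head irrG1 (concl_size_ctx_gt0 E1).
  by case=> <-.
Qed.

Lemma strip_iter_DL k d : strip (iter k DL d) = strip d.
Proof. by elim: k => //= k ->. Qed.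

Lemma strip_irreducible d G C :
  concl d = Some (G, C) -> irreducible G -> strip d = d.
Proof. by case: d => //= d; case: (concl d) => [[[|A [|B D]] C']|] // [<-]. Qed.

Lemma concl_iter_DL a xs ys d C :
  concl d = Some (a :: xs ++ ys, C) ->
  concl (iter (size xs) DL d) = Some (foldl Prod a xs :: ys, C).
Proof.
elim: xs a d => [|x xs IHxs] a d E //.
by rewrite [size _]/= iterSr; apply: IHxs => /=; rewrite E.
Qed.

Lemma concl_refold d a xs C :
  concl d = Some (a :: xs, C) -> concl (refold d) = Some ([:: foldl Prod a xs], C).
Proof. by move=> E; rewrite /refold E; apply: concl_iter_DL; rewrite cats0. Qed.

Lemma refold_strip d A C : concl d = Some ([:: A], C) -> refold (strip d) = d.
Proof.
by move=> E; rewrite /refold (concl_strip E) cats0 (iter_DL_strip E).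
Qed.

Lemma strip_refold d G C :
  concl d = Some (G, C) -> irreducible G -> strip (refold d) = d.
Proof. by move=> E irrG; rewrite /refold E strip_iter_DL (strip_irreducible E). Qed.

Section Counting.

Variable n : nat.

Definition is_target (C : formula) : bool :=
  (fsize C == n) && (frontier C == iota 0 n.+1).

Definition derives_target (P : pred (seq formula)) (d : deriv) : bool :=
  if concl d is Some (G, C) then is_target C && P G else false.

Definition candidates : seq deriv := undup (enum_deriv n.*2.+1 n.+1).

Lemma ell_derivP k d : ell_deriv n k d <-> derives_target (fun G => size G == k) d.
Proof.
rewrite /ell_deriv /derives_target /is_target; split.
- by case=> G [C [-> [-> [-> ->]]]]; rewrite !eqxx.
- by case: (concl d) => [[G C]|] // /andP[/andP[/eqP ? /eqP ?] /eqP ?]; exists G, C.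
Qed.

Lemma r_derivP k d :
  r_deriv n k d <-> derives_target (fun G => irreducible G && (size G == k)) d.
Proof.
rewrite /r_deriv /derives_target /is_target; split.
- by case=> G [C [-> [-> [-> [-> ->]]]]]; rewrite !eqxx.
- case: (concl d) => [[G C]|] // /andP[/andP[/eqP ? /eqP ?] /andP[? /eqP ?]].
  by exists G, C.
Qed.

Lemma derives_target_candidates P : {subset derives_target P <= candidates}.
Proof.
move=> d; rewrite unfold_in /derives_target mem_undup.
case E: (concl d) => [[G C]|] // /andP[/andP[/eqP sizeC /eqP frC] _].
apply: mem_enum_deriv; first by rewrite -sizeC (concl_height E).
by apply/allP=> p /(concl_atoms E); rewrite frC mem_iota.
Qed.

Lemma derives_target_size_ctx_gt k d :
  n.+1 < k -> derives_target (fun G => irreducible G && (size G == k)) d = false.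
Proof.
move=> ltk; rewrite /derives_target; case E: (concl d) => [[G C]|] //.
apply/negbTE/and3P => -[/andP[/eqP sizeC _] _ /eqP sizeG].
by have := concl_size_ctx_le E; rewrite sizeC sizeG leqNgt ltk.
Qed.

Lemma sum_derives_target_size_ctx d :
  \sum_(k < n.+2) derives_target (fun G => irreducible G && (size G == k)) d =
  derives_target irreducible d.
Proof.
rewrite /derives_target; case E: (concl d) => [[G C]|]; last by rewrite big1.
under eq_bigr do rewrite andbA.
case: (boolP (is_target C && irreducible G)); last by rewrite big1.
move=> /andP[/andP[/eqP sizeC _] _].
have ltG : size G < n.+2 by rewrite ltnS -sizeC (concl_size_ctx_le E).
rewrite (bigD1 (Ordinal ltG)) //= eqxx big1 // => k /negbTE.
by rewrite -val_eqE eq_sym => ->.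
Qed.

Lemma sum_count_derives_target_size_ctx s :
  \sum_(k < n.+2)
    count (derives_target (fun G => irreducible G && (size G == k))) s =
  count (derives_target irreducible) s.
Proof.
elim: s => [|d s IHs] /=; first by rewrite big1.
by rewrite big_split /= IHs sum_derives_target_size_ctx.
Qed.

Lemma derives_target_strip d :
  derives_target (fun G => size G == 1) d ->
  derives_target irreducible (strip d) /\ refold (strip d) = d.
Proof.
rewrite /derives_target; case E: (concl d) => [[[|A [|B D]] C]|] //=;
  rewrite ?andbF // => /andP[targetC _].
by rewrite (concl_strip E) targetC irreducible_unfold (refold_strip E).
Qed.

Lemma derives_target_refold d :
  derives_target irreducible d ->
  derives_target (fun G => size G == 1) (refold d) /\ strip (refold d) = d.
Proof.
rewrite /derives_target; case E: (concl d) => [[G C]|] // /andP[targetC irrG].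
case: G E irrG => [/concl_size_ctx_gt0 // | a xs] E irrG.
by rewrite (concl_refold E) targetC (strip_refold E).
Qed.

Lemma count_single_ctx_irreducible :
  count (derives_target (fun G => size G == 1)) candidates =
  count (derives_target irreducible) candidates.
Proof.
have cand_uniq : uniq candidates by apply: undup_uniq.
apply/eqP; rewrite eqn_leq; apply/andP; split.
- apply: (count_leq_cancel (f := strip) (g := refold) cand_uniq).
  move=> d _ /derives_target_strip[irr ->].
  by split=> //; apply: derives_target_candidates irr.
- apply: (count_leq_cancel (f := refold) (g := strip) cand_uniq).
  move=> d _ /derives_target_refold[one ->].
  by split=> //; apply: derives_target_candidates one.
Qed.

End Counting.

Theorem proposition3p3 :
  forall n : nat,
  exists (l1 : nat) (r : nat -> nat) (N : nat),
    counts (ell_deriv n 1) l1 /\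
    (forall k, counts (r_deriv n k) (r k)) /\
    (forall k, N <= k -> r k = 0) /\
    l1 = \sum_(k < N) r k.
Proof.
move=> n; have cand_uniq : uniq (candidates n) by apply: undup_uniq.
exists (count (derives_target n (fun G => size G == 1)) (candidates n)).
exists (fun k =>
  count (derives_target n (fun G => irreducible G && (size G == k))) (candidates n)).
exists n.+2; split; [|split; [|split]].
- exact: counts_count (ell_derivP n 1) cand_uniq (@derives_target_candidates n _).
- move=> k.
  exact: counts_count (r_derivP n k) cand_uniq (@derives_target_candidates n _).
- move=> k ltk; rewrite -(count_pred0 (candidates n)).
  by apply: eq_count => d; apply: derives_target_size_ctx_gt.
- by rewrite sum_count_derives_target_size_ctx count_single_ctx_irreducible.
Qed.
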